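(* Let $\Gamma$ be a flat Type $\mathcal A$ connection which is strongly linearly projectively equivalent to $\Gamma_i^0$ for some $0\le i\le 5$ (i.e. $\Gamma={}^L\Gamma_i^0$ for some real linear function $L$). Then one of the following holds: (1) $\Gamma=\Gamma_i^0$; (2) $i=1$, $\mathcal Q(\Gamma)=\mathrm{Span}\{e^{-x^1},\mathbb 1,x^2\}$, and $T(x^1,x^2)=(x^2,-x^1)$ intertwines $\Gamma$ and $\Gamma_3^0$; (3) $i=2$, $\mathcal Q(\Gamma)=\mathrm{Span}\{e^{x^1},\mathbb 1,e^{x^2+x^1}\}$, and $T(x^1,x^2)=(-x^1,x^1+x^2)$ intertwines $\Gamma$ and $\Gamma_2^0$; (4) $i=2$, $\mathcal Q(\Gamma)=\mathrm{Span}\{e^{-x^2},e^{-x^1-x^2},\mathbb 1\}$, and $T(x^1,x^2)=(x^2,-x^1-x^2)$ intertwines $\Gamma$ and $\Gamma_2^0$; (5) $i=3$, $\mathcal Q(\Gamma)=\mathrm{Span}\{e^{-x^2},x^1e^{-x^2},\mathbb 1\}$, and $T(x^1,x^2)=(-x^2,x^1)$ intertwines $\Gamma$ and $\Gamma_1^0$.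
   Context: A torsion-free connection has Christoffel symbols $\nabla_{\partial_{x^i}}\partial_{x^j}=\Gamma_{ij}^k\partial_{x^k}$; curvature $R(X,Y)Z=\nabla_X\nabla_YZ-\nabla_Y\nabla_XZ-\nabla_{[X,Y]}Z$, Ricci tensor $\rho(Y,Z)=\mathrm{Tr}(X\mapsto R(X,Y)Z)$, $\rho_s$ its symmetrization. Hessian $\mathcal H_\nabla f=(\partial_{x^i}\partial_{x^j}f-\Gamma_{ij}^k\partial_{x^k}f)dx^i\otimes dx^j$; on a surface $\mathcal Q(\Gamma)=\{f\in C^\infty(\mathbb R^2):\mathcal H_\nabla f+f\rho_s=0\}$. $\mathbb 1$ denotes the constant function $1$. For real constants, $\Gamma(a,b,c,d,e,f)$ denotes the connection on $\mathbb R^2$ with constant Christoffel symbols $\Gamma_{11}^1=a$, $\Gamma_{11}^2=b$, $\Gamma_{12}^1=\Gamma_{21}^1=c$, $\Gamma_{12}^2=\Gamma_{21}^2=d$, $\Gamma_{22}^1=e$, $\Gamma_{22}^2=f$ (Type $\mathcal A$ connections). For $g$ smooth, ${}^g\nabla_XY:=\nabla_XY+X(g)Y+Y(g)X$; for a linear function $L=a_1x^1+a_2x^2$, ${}^L\Gamma(a,b,c,d,e,f)=\Gamma(a+2a_1,b,c+a_2,d+a_1,e,f+2a_2)$; two Type $\mathcal A$ connections $\nabla,\tilde\nabla$ are strongly linearly projectively equivalent if $\tilde\nabla={}^L\nabla$ for some such $L$. ''$T$ intertwines $\Gamma$ and $\Gamma'$'' means $T^*\Gamma'=\Gamma$. The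 flat connections: $\Gamma_0^0=\Gamma(0,0,0,0,0,0)$, $\Gamma_1^0=\Gamma(1,0,0,1,0,0)$, $\Gamma_2^0=\Gamma(-1,0,0,0,0,1)$, $\Gamma_3^0=\Gamma(0,0,0,0,0,1)$, $\Gamma_4^0=\Gamma(0,0,0,0,1,0)$, $\Gamma_5^0=\Gamma(1,0,0,1,-1,0)$. *)

From Stdlib Require Import Reals List.
Import ListNotations.
Open Scope R_scope.

Inductive Idx : Type := I1 | I2.

Definition sumI (F : Idx -> R) : R := F I1 + F I2.

(* Type A connection: constant Christoffel symbols Gamma(a,b,c,d,e,f). *)
Record Conn : Type := mkConn { ga : R; gb : R; gc : R; gd : R; ge : R; gf : R }.

(* chr G i j k = Gamma_{ij}^k  (symmetric in i j: torsion free). *)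
Definition chr (G : Conn) (i j k : Idx) : R :=
  match i, j, k with
  | I1, I1, I1 => ga G | I1, I1, I2 => gb G
  | I1, I2, I1 => gc G | I2, I1, I1 => gc G
  | I1, I2, I2 => gd G | I2, I1, I2 => gd G
  | I2, I2, I1 => ge G | I2, I2, I2 => gf G
  end.

(* Curvature of a connection with constant Christoffel symbols:
   R(d_i,d_j)d_k = R_{ijk}^l d_l, with
   R_{ijk}^l = Gamma_{jk}^m Gamma_{im}^l - Gamma_{ik}^m Gamma_{jm}^l
   (derivatives of constants and [d_i,d_j] vanish). *)
Definition curv (G : Conn) (i j k l : Idx) : R :=
  sumI (fun m => chr G j k m * chr G i m l - chr G i k m * chr G j m l).

Definition flat (G : Conn) : Prop := forall i j k l, curv G i j k l = 0.

Definition ricci (G : Conn) (j k : Idx) : R := sumI (fun i => curv G i j k i).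
Definition ricci_s (G : Conn) (j k : Idx) : R := (ricci G j k + ricci G k j) / 2.

(* Strong linear projective modification by L = a1 x^1 + a2 x^2. *)
Definition proj_mod (a1 a2 : R) (G : Conn) : Conn :=
  mkConn (ga G + 2 * a1) (gb G) (gc G + a2) (gd G + a1) (ge G) (gf G + 2 * a2).

Definition Gamma0 (i : nat) : Conn :=
  match i with
  | 0%nat => mkConn 0 0 0 0 0 0
  | 1%nat => mkConn 1 0 0 1 0 0
  | 2%nat => mkConn (-1) 0 0 0 0 1
  | 3%nat => mkConn 0 0 0 0 0 1
  | 4%nat => mkConn 0 0 0 0 1 0
  | _ => mkConn 1 0 0 1 (-1) 0
  end.

Definition cont2 (f : R -> R -> R) : Prop :=
  forall x y eps, 0 < eps -> exists del, 0 < del /\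
    forall x' y', Rabs (x' - x) < del -> Rabs (y' - y) < del ->
      Rabs (f x' y' - f x y) < eps.

(* D is the family of all iterated partial derivatives of f:
   D [] = f, D (i :: w) = d/dx^i (D w), all continuous. *)
Definition smooth_family (f : R -> R -> R) (D : list Idx -> R -> R -> R) : Prop :=
  D [] = f /\
  forall w, cont2 (D w) /\
    forall x y, derivable_pt_lim (fun t => D w t y) x (D (I1 :: w) x y) /\
                derivable_pt_lim (fun t => D w x t) y (D (I2 :: w) x y).

Definition smooth2 (f : R -> R -> R) : Prop := exists D, smooth_family f D.

Definition inQ (G : Conn) (f : R -> R -> R) : Prop :=
  exists D, smooth_family f D /\
    forall x y i j,
      D [i; j] x y - sumI (fun k => chr G i j k * D [k] x y)
      + f x y * ricci_s G i j = 0.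

Definition Q_is_span3 (G : Conn) (f1 f2 f3 : R -> R -> R) : Prop :=
  forall f, inQ G f <->
    exists c1 c2 c3, forall x y, f x y = c1 * f1 x y + c2 * f2 x y + c3 * f3 x y.

(* Linear map T(x)^m = sum_k A m k x^k; A is its (constant) Jacobian.
   T^* G' = G means  T_*(nabla_{d_i} d_j) = nabla'_{T_* d_i} T_* d_j, i.e.
   sum_l Gamma_{ij}^l A_{ml} = sum_{a,b} A_{ai} A_{bj} Gamma'_{ab}^m. *)
Definition intertwines (A : Idx -> Idx -> R) (G G' : Conn) : Prop :=
  forall i j m,
    sumI (fun l => chr G i j l * A m l) =
    sumI (fun a => sumI (fun b => A a i * A b j * chr G' a b m)).

Definition mat (a11 a12 a21 a22 : R) (m k : Idx) : R :=
  match m, k with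
  | I1, I1 => a11 | I1, I2 => a12 | I2, I1 => a21 | I2, I2 => a22 end.

(* Flatness of ^L Gamma_i^0 amounts to three quadratic equations in the coefficients (a1, a2)
   of L, which force L = 0 except in four cases.  A flat connection has vanishing Ricci
   tensor, so Q(Gamma) is the kernel of the Hessian.  For the four exceptional connections the
   gradient (f_1, f_2) of such an f solves a triangular first-order linear system with constant
   coefficients, solved one unknown at a time since a function with partials (a u, b u) is a
   multiple of exp (a x^1 + b x^2).  Conversely each spanning function is a product of a
   function of x^1 and a function of x^2 with explicit derivatives of all orders, so it is
   smooth, and its Hessian vanishes by direct computation. *)

From Coquelicot Require Import Coquelicot.
From Stdlib Require Import Reals Lra Lia List FunctionalExtensionality.
Import ListNotations.
Open Scope R_scope.

Lemma proj_mod_0 (G : Conn) : proj_mod 0 0 G = G.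
Proof. destruct G; unfold proj_mod; simpl; f_equal; ring. Qed.

Lemma flat_iff (G : Conn) :
  flat G <->
  gd G * gc G - gb G * ge G = 0 /\
  gc G * gb G + gd G * gd G - ga G * gd G - gb G * gf G = 0 /\
  ge G * ga G + gf G * gc G - gc G * gc G - gd G * ge G = 0.
Proof.
  split.
  - intros H.
    pose proof (H I1 I2 I1 I1) as E1; pose proof (H I1 I2 I1 I2) as E2;
      pose proof (H I1 I2 I2 I1) as E3.
    unfold curv, sumI, chr in E1, E2, E3; simpl in E1, E2, E3; repeat split; lra.
  - intros (E1 & E2 & E3) [] [] [] []; unfold curv, sumI, chr; simpl; lra.
Qed.

Lemma ricci_s_flat (G : Conn) (i j : Idx) : flat G -> ricci_s G i j = 0.
Proof. intros H. unfold ricci_s, ricci, sumI. rewrite !H. lra. Qed.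

Lemma flat_proj_mod_Gamma0_0 a1 a2 :
  flat (proj_mod a1 a2 (Gamma0 0)) -> a1 = 0 /\ a2 = 0.
Proof. intros [E1 [E2 E3]]%flat_iff; simpl in *; split; nra. Qed.

Lemma flat_proj_mod_Gamma0_1 a1 a2 :
  flat (proj_mod a1 a2 (Gamma0 1)) -> a2 = 0 /\ (a1 = 0 \/ a1 = -1).
Proof.
  intros [E1 [E2 E3]]%flat_iff; simpl in *.
  assert (Ha1 : a1 * (a1 + 1) = 0) by nra.
  apply Rmult_integral in Ha1; split; [nra | lra].
Qed.

Lemma flat_proj_mod_Gamma0_2 a1 a2 :
  flat (proj_mod a1 a2 (Gamma0 2)) ->
  (a1 = 0 /\ a2 = 0) \/ (a1 = 1 /\ a2 = 0) \/ (a1 = 0 /\ a2 = -1).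
Proof.
  intros [E1 [E2 E3]]%flat_iff; simpl in *.
  assert (Ha1 : a1 * (1 - a1) = 0) by nra.
  assert (Ha2 : a2 * (1 + a2) = 0) by nra.
  apply Rmult_integral in Ha1, Ha2.
  destruct Ha1, Ha2; [left | right; right | right; left | exfalso]; nra.
Qed.

Lemma flat_proj_mod_Gamma0_3 a1 a2 :
  flat (proj_mod a1 a2 (Gamma0 3)) -> a1 = 0 /\ (a2 = 0 \/ a2 = -1).
Proof.
  intros [E1 [E2 E3]]%flat_iff; simpl in *.
  assert (Ha2 : a2 * (1 + a2) = 0) by nra.
  apply Rmult_integral in Ha2; split; [nra | lra].
Qed.

Lemma flat_proj_mod_Gamma0_4 a1 a2 :
  flat (proj_mod a1 a2 (Gamma0 4)) -> a1 = 0 /\ a2 = 0.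
Proof.
  intros [E1 [E2 E3]]%flat_iff; simpl in *.
  assert (Ha1 : a1 = 0) by nra; subst a1; split; nra.
Qed.

Lemma flat_proj_mod_Gamma0_5 a1 a2 :
  flat (proj_mod a1 a2 (Gamma0 5)) -> a1 = 0 /\ a2 = 0.
Proof.
  intros [E1 [E2 E3]]%flat_iff; simpl in *.
  assert (Ha1 : a1 * (a1 + 1) = 0) by nra.
  apply Rmult_integral in Ha1; split; nra.
Qed.

Definition has_partials (u p q : R -> R -> R) : Prop :=
  forall x y, derivable_pt_lim (fun t => u t y) x (p x y) /\
              derivable_pt_lim (fun t => u x t) y (q x y).

Lemma has_partials_ext u p q p' q' :
  has_partials u p q -> (forall x y, p x y = p' x y) -> (forall x y, q x y = q' x y) ->
  has_partials u p' q'.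
Proof. intros H Ep Eq x y; rewrite <- Ep, <- Eq; apply H. Qed.

Lemma has_partials_minus u U p q P Q :
  has_partials u p q -> has_partials U P Q ->
  has_partials (fun x y => u x y - U x y) (fun x y => p x y - P x y) (fun x y => q x y - Q x y).
Proof.
  intros Hu HU x y; destruct (Hu x y), (HU x y); split; now apply derivable_pt_lim_minus.
Qed.

Lemma zero_derivative_const (h : R -> R) :
  (forall t, derivable_pt_lim h t 0) -> forall s t, h s = h t.
Proof.
  intros H s t.
  assert (pr : derivable h) by (intro r; exists 0; apply H).
  apply (null_derivative_1 h pr); intro r; apply derive_pt_eq_0, H.
Qed.

Lemma has_partials_zero_const u :
  has_partials u (fun _ _ => 0) (fun _ _ => 0) -> exists c, forall x y, u x y = c.
Proof.
  intros H; exists (u 0 0); intros x y.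
  rewrite (zero_derivative_const (fun t => u t y) (fun t => proj1 (H t y)) x 0).
  apply (zero_derivative_const (fun t => u 0 t) (fun t => proj2 (H 0 t))).
Qed.

Lemma derivable_pt_lim_mult_exp (h : R -> R) l c d x :
  derivable_pt_lim h x l ->
  derivable_pt_lim (fun t => h t * exp (c * t + d)) x ((l + c * h x) * exp (c * x + d)).
Proof.
  intros H%is_derive_Reals; apply is_derive_Reals.
  replace ((l + c * h x) * exp (c * x + d))
    with (plus (mult l (exp (c * x + d))) (mult (h x) (c * exp (c * x + d))))
    by (unfold plus, mult; simpl; ring).
  apply (is_derive_mult h (fun t => exp (c * t + d))); auto.
  - auto_derive; auto; ring.
  - intros; apply Rmult_comm.
Qed.

Lemma has_partials_linear_exp w a b :
  has_partials w (fun x y => a * w x y) (fun x y => b * w x y) ->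
  exists c, forall x y, w x y = c * exp (a * x + b * y).
Proof.
  intros H.
  destruct (has_partials_zero_const (fun x y => w x y * exp (- a * x + - b * y))) as [c Hc].
  { intros x y; destruct (H x y) as [Hx Hy]; split.
    - apply (derivable_pt_lim_mult_exp _ _ (- a) (- b * y)) in Hx.
      replace 0 with ((a * w x y + - a * w x y) * exp (- a * x + - b * y)) by ring.
      exact Hx.
    - apply (derivable_pt_lim_mult_exp _ _ (- b) (- a * x)) in Hy.
      replace 0 with ((b * w x y + - b * w x y) * exp (- b * y + - a * x)) by ring.
      replace (fun t => w x t * exp (- a * x + - b * t))
        with (fun t => w x t * exp (- b * t + - a * x)); [exact Hy|].
      apply functional_extensionality; intro t; do 2 f_equal; ring. }
  exists c; intros x y; rewrite <- (Hc x y), Rmult_assoc, <- exp_plus.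
  replace (- a * x + - b * y + (a * x + b * y)) with 0 by ring; rewrite exp_0; ring.
Qed.

Lemma has_partials_same_const u U p q :
  has_partials u p q -> has_partials U p q -> exists c, forall x y, u x y = c + U x y.
Proof.
  intros Hu HU.
  destruct (has_partials_zero_const (fun x y => u x y - U x y)) as [c Hc].
  { eapply has_partials_ext; [apply (has_partials_minus _ _ _ _ _ _ Hu HU) | |];
      intros; cbv beta; ring. }
  exists c; intros x y; rewrite <- (Hc x y); ring.
Qed.

Lemma has_partials_affine_unique u U a b p q :
  has_partials u (fun x y => a * u x y + p x y) (fun x y => b * u x y + q x y) ->
  has_partials U (fun x y => a * U x y + p x y) (fun x y => b * U x y + q x y) ->
  exists c, forall x y, u x y = c * exp (a * x + b * y) + U x y.
Proof.
  intros Hu HU.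
  destruct (has_partials_linear_exp (fun x y => u x y - U x y) a b) as [c Hc].
  { eapply has_partials_ext; [apply (has_partials_minus _ _ _ _ _ _ Hu HU) | |];
      intros; cbv beta; ring. }
  exists c; intros x y; rewrite <- (Hc x y); ring.
Qed.

Definition derivative_family (D : list Idx -> R -> R -> R) : Prop :=
  forall w, cont2 (D w) /\ has_partials (D w) (D (I1 :: w)) (D (I2 :: w)).

Definition hessian_kernel (G : Conn) (D : list Idx -> R -> R -> R) : Prop :=
  forall x y i j, D [i; j] x y = sumI (fun k => chr G i j k * D [k] x y).

Lemma inQ_flat G f : flat G ->
  inQ G f <-> exists D, D [] = f /\ derivative_family D /\ hessian_kernel G D.
Proof.
  intros Hflat; split.
  - intros (D & [HD0 HD] & Hess); exists D; repeat split; auto; try apply HD.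
    intros x y i j; specialize (Hess x y i j); rewrite ricci_s_flat in Hess; auto; lra.
  - intros (D & HD0 & HD & Hess); exists D; split; [split; auto|].
    intros x y i j; rewrite ricci_s_flat, Hess; auto; ring.
Qed.

Lemma cont2_of_continuous (f : R -> R -> R) :
  (forall x y, continuous (fun p : R * R => f (fst p) (snd p)) (x, y)) -> cont2 f.
Proof.
  intros H x y eps Heps.
  destruct (H x y (fun z => Rabs (z - f x y) < eps)) as [d Hd].
  - exists (mkposreal eps Heps); auto.
  - exists d; split; [apply cond_pos|]; intros x' y' Hx Hy; apply (Hd (x', y')); split; auto.
Qed.

Lemma cont2_plus f g : cont2 f -> cont2 g -> cont2 (fun x y => f x y + g x y).
Proof.
  intros Hf Hg x y eps Heps.
  destruct (Hf x y (eps / 2)) as (d1 & Hd1 & H1); [lra|].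
  destruct (Hg x y (eps / 2)) as (d2 & Hd2 & H2); [lra|].
  exists (Rmin d1 d2); split; [now apply Rmin_pos|]; intros x' y' Hx Hy.
  specialize (H1 x' y' (Rlt_le_trans _ _ _ Hx (Rmin_l _ _)) (Rlt_le_trans _ _ _ Hy (Rmin_l _ _))).
  specialize (H2 x' y' (Rlt_le_trans _ _ _ Hx (Rmin_r _ _)) (Rlt_le_trans _ _ _ Hy (Rmin_r _ _))).
  replace (f x' y' + g x' y' - (f x y + g x y)) with ((f x' y' - f x y) + (g x' y' - g x y))
    by ring.
  eapply Rle_lt_trans; [apply Rabs_triang | lra].
Qed.

Lemma derivative_family_plus D E :
  derivative_family D -> derivative_family E ->
  derivative_family (fun w x y => D w x y + E w x y).
Proof.
  intros HD HE w; destruct (HD w) as [CD PD], (HE w) as [CE PE]; split.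
  - now apply cont2_plus.
  - intros x y; destruct (PD x y), (PE x y); split; now apply derivable_pt_lim_plus.
Qed.

Definition derivative_chain (phi : nat -> R -> R) : Prop :=
  forall n x, derivable_pt_lim (phi n) x (phi (S n) x).

Definition Idx_eqb (i j : Idx) : bool :=
  match i, j with I1, I1 | I2, I2 => true | _, _ => false end.

Fixpoint occurrences (i : Idx) (w : list Idx) : nat :=
  match w with
  | [] => O
  | j :: w' => if Idx_eqb i j then S (occurrences i w') else occurrences i w'
  end.

(* When [phi] and [psi] are derivative chains, [product_family c phi psi w] is the iterated
   partial derivative [d^w] of [c * phi 0 x1 * psi 0 x2]. *)
Definition product_family (c : R) (phi psi : nat -> R -> R) (w : list Idx) (x y : R) : R :=
  c * phi (occurrences I1 w) x * psi (occurrences I2 w) y.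

Lemma derivative_chain_continuous phi n x :
  derivative_chain phi -> continuous (phi n) x.
Proof.
  intros H; apply continuity_pt_filterlim, derivable_continuous_pt.
  exists (phi (S n) x); apply H.
Qed.

Lemma product_family_derivative c phi psi :
  derivative_chain phi -> derivative_chain psi -> derivative_family (product_family c phi psi).
Proof.
  intros Hphi Hpsi w; unfold product_family; split.
  - apply cont2_of_continuous; intros x y.
    apply (continuous_mult (fun p : R * R => c * phi _ (fst p)) (fun p => psi _ (snd p))).
    + apply (continuous_mult (fun _ => c) (fun p : R * R => phi _ (fst p))).
      * apply continuous_const.
      * apply (continuous_comp fst (phi _)); [apply continuous_fst|].
        now apply derivative_chain_continuous.
    + apply (continuous_comp snd (psi _)); [apply continuous_snd|].
      now apply derivative_chain_continuous.
  - intros x y; simpl; split.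
    + apply (derivable_pt_lim_scal_right (fun t => c * phi _ t)).
      apply derivable_pt_lim_scal, Hphi.
    + apply derivable_pt_lim_scal, Hpsi.
Qed.

Definition exp_chain (a : R) (n : nat) (x : R) : R := a ^ n * exp (a * x).

Lemma exp_chain_derivative a : derivative_chain (exp_chain a).
Proof. intros n x; apply is_derive_Reals; unfold exp_chain; auto_derive; auto; simpl; ring. Qed.

Definition id_chain (n : nat) (x : R) : R :=
  match n with O => x | 1%nat => 1 | _ => 0 end.

Lemma id_chain_derivative : derivative_chain id_chain.
Proof.
  intros [|[|n]] x; simpl;
    [apply derivable_pt_lim_id | apply derivable_pt_lim_const | apply derivable_pt_lim_const].
Qed.

Ltac partials_from_hessian P Hess :=
  eapply has_partials_ext; [apply P | |];
  intros ?x ?y; cbv beta; rewrite ?Hess; unfold sumI, chr; simpl.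

Ltac explicit_partials :=
  intros ?s ?t; cbv beta; split; apply is_derive_Reals; auto_derive; auto.

Lemma Q_proj_mod_Gamma0_1 :
  Q_is_span3 (proj_mod (-1) 0 (Gamma0 1))
    (fun x1 x2 => exp (- x1)) (fun _ _ => 1) (fun x1 x2 => x2).
Proof.
  intros f; rewrite inQ_flat by (apply flat_iff; simpl; lra); split.
  - intros (D & <- & HD & Hess).
    assert (P : forall w, has_partials (D w) (D (I1 :: w)) (D (I2 :: w))) by apply HD.
    destruct (has_partials_linear_exp (D [I1]) (-1) 0) as [g H1].
    { partials_from_hessian P Hess; ring. }
    destruct (has_partials_zero_const (D [I2])) as [k H2].
    { partials_from_hessian P Hess; ring. }
    destruct (has_partials_same_const (D [])
                (fun x y => - g * exp (-1 * x + 0 * y) + k * y) _ _ (P [])) as [c Hf].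
    { explicit_partials; rewrite ?H1, ?H2; ring. }
    exists (- g), c, k; intros x y; rewrite Hf.
    replace (-1 * x + 0 * y) with (- x) by ring; ring.
  - intros (c1 & c2 & c3 & Hf).
    exists (fun w x y => product_family c1 (exp_chain (-1)) (exp_chain 0) w x y
                      + product_family c2 (exp_chain 0) (exp_chain 0) w x y
                      + product_family c3 (exp_chain 0) id_chain w x y); split; [|split].
    + apply functional_extensionality; intro x; apply functional_extensionality; intro y.
      rewrite Hf.
      unfold product_family, exp_chain; simpl.
      rewrite !Rmult_0_l, exp_0; replace (-1 * x) with (- x) by ring; ring.
    + repeat apply derivative_family_plus; apply product_family_derivative;
        auto using exp_chain_derivative, id_chain_derivative.
    + intros x y [] []; unfold product_family, exp_chain, sumI, chr; simpl; ring.
Qed.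

Lemma Q_proj_mod_Gamma0_2_x1 :
  Q_is_span3 (proj_mod 1 0 (Gamma0 2))
    (fun x1 x2 => exp x1) (fun _ _ => 1) (fun x1 x2 => exp (x2 + x1)).
Proof.
  intros f; rewrite inQ_flat by (apply flat_iff; simpl; lra); split.
  - intros (D & <- & HD & Hess).
    assert (P : forall w, has_partials (D w) (D (I1 :: w)) (D (I2 :: w))) by apply HD.
    destruct (has_partials_linear_exp (D [I2]) 1 1) as [k H2].
    { partials_from_hessian P Hess; ring. }
    destruct (has_partials_affine_unique (D [I1]) (fun x y => k * exp (1 * x + 1 * y))
                1 0 (fun _ _ => 0) (fun x y => k * exp (1 * x + 1 * y))) as [g H1].
    { partials_from_hessian P Hess; rewrite ?H2; ring. }
    { explicit_partials; ring. }
    destruct (has_partials_same_const (D [])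
                (fun x y => g * exp (1 * x + 0 * y) + k * exp (1 * x + 1 * y))
                _ _ (P [])) as [c Hf].
    { explicit_partials; rewrite ?H1, ?H2; ring. }
    exists g, c, k; intros x y; rewrite Hf.
    replace (1 * x + 0 * y) with x by ring; replace (1 * x + 1 * y) with (y + x) by ring; ring.
  - intros (c1 & c2 & c3 & Hf).
    exists (fun w x y => product_family c1 (exp_chain 1) (exp_chain 0) w x y
                      + product_family c2 (exp_chain 0) (exp_chain 0) w x y
                      + product_family c3 (exp_chain 1) (exp_chain 1) w x y); split; [|split].
    + apply functional_extensionality; intro x; apply functional_extensionality; intro y.
      rewrite Hf.
      unfold product_family, exp_chain; simpl.
      rewrite !Rmult_0_l, !Rmult_1_l, exp_0, exp_plus; ring.
    + repeat apply derivative_family_plus; apply product_family_derivative;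
        auto using exp_chain_derivative.
    + intros x y [] []; unfold product_family, exp_chain, sumI, chr; simpl; ring.
Qed.

Lemma Q_proj_mod_Gamma0_2_x2 :
  Q_is_span3 (proj_mod 0 (-1) (Gamma0 2))
    (fun x1 x2 => exp (- x2)) (fun x1 x2 => exp (- x1 - x2)) (fun _ _ => 1).
Proof.
  intros f; rewrite inQ_flat by (apply flat_iff; simpl; lra); split.
  - intros (D & <- & HD & Hess).
    assert (P : forall w, has_partials (D w) (D (I1 :: w)) (D (I2 :: w))) by apply HD.
    destruct (has_partials_linear_exp (D [I1]) (-1) (-1)) as [g H1].
    { partials_from_hessian P Hess; ring. }
    destruct (has_partials_affine_unique (D [I2]) (fun x y => g * exp (-1 * x + -1 * y))
                0 (-1) (fun x y => - g * exp (-1 * x + -1 * y)) (fun _ _ => 0)) as [k H2].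
    { partials_from_hessian P Hess; rewrite ?H1; ring. }
    { explicit_partials; ring. }
    destruct (has_partials_same_const (D [])
                (fun x y => - k * exp (0 * x + -1 * y) - g * exp (-1 * x + -1 * y))
                _ _ (P [])) as [c Hf].
    { explicit_partials; rewrite ?H1, ?H2; ring. }
    exists (- k), (- g), c; intros x y; rewrite Hf.
    replace (0 * x + -1 * y) with (- y) by ring;
      replace (-1 * x + -1 * y) with (- x - y) by ring; ring.
  - intros (c1 & c2 & c3 & Hf).
    exists (fun w x y => product_family c1 (exp_chain 0) (exp_chain (-1)) w x y
                      + product_family c2 (exp_chain (-1)) (exp_chain (-1)) w x y
                      + product_family c3 (exp_chain 0) (exp_chain 0) w x y); split; [|split].
    + apply functional_extensionality; intro x; apply functional_extensionality; intro y.
      rewrite Hf.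
      unfold product_family, exp_chain; simpl.
      replace (- x - y) with (-1 * x + -1 * y) by ring; rewrite exp_plus.
      rewrite !Rmult_0_l, exp_0; replace (- y) with (-1 * y) by ring; ring.
    + repeat apply derivative_family_plus; apply product_family_derivative;
        auto using exp_chain_derivative.
    + intros x y [] []; unfold product_family, exp_chain, sumI, chr; simpl; ring.
Qed.

Lemma Q_proj_mod_Gamma0_3 :
  Q_is_span3 (proj_mod 0 (-1) (Gamma0 3))
    (fun x1 x2 => exp (- x2)) (fun x1 x2 => x1 * exp (- x2)) (fun _ _ => 1).
Proof.
  intros f; rewrite inQ_flat by (apply flat_iff; simpl; lra); split.
  - intros (D & <- & HD & Hess).
    assert (P : forall w, has_partials (D w) (D (I1 :: w)) (D (I2 :: w))) by apply HD.
    destruct (has_partials_linear_exp (D [I1]) 0 (-1)) as [g H1].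
    { partials_from_hessian P Hess; ring. }
    destruct (has_partials_affine_unique (D [I2]) (fun x y => - g * x * exp (0 * x + -1 * y))
                0 (-1) (fun x y => - g * exp (0 * x + -1 * y)) (fun _ _ => 0)) as [k H2].
    { partials_from_hessian P Hess; rewrite ?H1; ring. }
    { explicit_partials; ring. }
    destruct (has_partials_same_const (D [])
                (fun x y => g * x * exp (0 * x + -1 * y) - k * exp (0 * x + -1 * y))
                _ _ (P [])) as [c Hf].
    { explicit_partials; rewrite ?H1, ?H2; ring. }
    exists (- k), g, c; intros x y; rewrite Hf.
    replace (0 * x + -1 * y) with (- y) by ring; ring.
  - intros (c1 & c2 & c3 & Hf).
    exists (fun w x y => product_family c1 (exp_chain 0) (exp_chain (-1)) w x y
                      + product_family c2 id_chain (exp_chain (-1)) w x y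
                      + product_family c3 (exp_chain 0) (exp_chain 0) w x y); split; [|split].
    + apply functional_extensionality; intro x; apply functional_extensionality; intro y.
      rewrite Hf.
      unfold product_family, exp_chain; simpl.
      rewrite !Rmult_0_l, exp_0; replace (-1 * y) with (- y) by ring; ring.
    + repeat apply derivative_family_plus; apply product_family_derivative;
        auto using exp_chain_derivative, id_chain_derivative.
    + intros x y [] []; unfold product_family, exp_chain, sumI, chr; simpl; ring.
Qed.

Lemma intertwines_proj_mod_Gamma0_1 :
  intertwines (mat 0 1 (-1) 0) (proj_mod (-1) 0 (Gamma0 1)) (Gamma0 3).
Proof. intros [] [] []; unfold sumI, chr, mat; simpl; ring. Qed.

Lemma intertwines_proj_mod_Gamma0_2_x1 :
  intertwines (mat (-1) 0 1 1) (proj_mod 1 0 (Gamma0 2)) (Gamma0 2).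
Proof. intros [] [] []; unfold sumI, chr, mat; simpl; ring. Qed.

Lemma intertwines_proj_mod_Gamma0_2_x2 :
  intertwines (mat 0 1 (-1) (-1)) (proj_mod 0 (-1) (Gamma0 2)) (Gamma0 2).
Proof. intros [] [] []; unfold sumI, chr, mat; simpl; ring. Qed.

Lemma intertwines_proj_mod_Gamma0_3 :
  intertwines (mat 0 (-1) 1 0) (proj_mod 0 (-1) (Gamma0 3)) (Gamma0 1).
Proof. intros [] [] []; unfold sumI, chr, mat; simpl; ring. Qed.

Theorem theorem3p3 (G : Conn) (i : nat) (a1 a2 : R) :
  (i <= 5)%nat ->
  flat G ->
  G = proj_mod a1 a2 (Gamma0 i) ->
  G = Gamma0 i
  \/ (i = 1%nat /\
      Q_is_span3 G (fun x1 x2 => exp (- x1)) (fun _ _ => 1) (fun x1 x2 => x2) /\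
      intertwines (mat 0 1 (-1) 0) G (Gamma0 3))
  \/ (i = 2%nat /\
      Q_is_span3 G (fun x1 x2 => exp x1) (fun _ _ => 1) (fun x1 x2 => exp (x2 + x1)) /\
      intertwines (mat (-1) 0 1 1) G (Gamma0 2))
  \/ (i = 2%nat /\
      Q_is_span3 G (fun x1 x2 => exp (- x2)) (fun x1 x2 => exp (- x1 - x2)) (fun _ _ => 1) /\
      intertwines (mat 0 1 (-1) (-1)) G (Gamma0 2))
  \/ (i = 3%nat /\
      Q_is_span3 G (fun x1 x2 => exp (- x2)) (fun x1 x2 => x1 * exp (- x2)) (fun _ _ => 1) /\
      intertwines (mat 0 (-1) 1 0) G (Gamma0 1)).
Proof.
  intros Hi Hflat ->.
  destruct i as [|[|[|[|[|[|i]]]]]]; [| | | | | | lia].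
  - left; destruct (flat_proj_mod_Gamma0_0 _ _ Hflat) as [-> ->]; apply proj_mod_0.
  - destruct (flat_proj_mod_Gamma0_1 _ _ Hflat) as [-> [-> | ->]].
    + left; apply proj_mod_0.
    + right; left.
      exact (conj eq_refl (conj Q_proj_mod_Gamma0_1 intertwines_proj_mod_Gamma0_1)).
  - destruct (flat_proj_mod_Gamma0_2 _ _ Hflat) as [[-> ->] | [[-> ->] | [-> ->]]].
    + left; apply proj_mod_0.
    + do 2 right; left.
      exact (conj eq_refl (conj Q_proj_mod_Gamma0_2_x1 intertwines_proj_mod_Gamma0_2_x1)).
    + do 3 right; left.
      exact (conj eq_refl (conj Q_proj_mod_Gamma0_2_x2 intertwines_proj_mod_Gamma0_2_x2)).
  - destruct (flat_proj_mod_Gamma0_3 _ _ Hflat) as [-> [-> | ->]].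
    + left; apply proj_mod_0.
    + do 4 right.
      exact (conj eq_refl (conj Q_proj_mod_Gamma0_3 intertwines_proj_mod_Gamma0_3)).
  - left; destruct (flat_proj_mod_Gamma0_4 _ _ Hflat) as [-> ->]; apply proj_mod_0.
  - left; destruct (flat_proj_mod_Gamma0_5 _ _ Hflat) as [-> ->]; apply proj_mod_0.
Qed.
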